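(* Let $\mathrm{M}$ be a (loopless) matroid of rank $d+1$. For nested index sets $J\subseteq J'\subseteq[d]$, \[ \frac{N_J(\mathrm{M})}{U_J}\le\frac{N_{J'}(\mathrm{M})}{U_{J'}}. \]
   Context: For $J=\{j_1<\cdots<j_m\}\subseteq[d]$, $N_J(\mathrm{M})$ is the number of chains of flats $G_1\subsetneq\cdots\subsetneq G_m$ of $\mathrm{M}$ with $\operatorname{rk}(G_\ell)=j_\ell$ (with $N_\varnothing=1$). $U_J:=N_J(\mathrm{U}_{d+1})$ for the Boolean matroid $\mathrm{U}_{d+1}$ on $d+1$ elements; explicitly $U_J=\frac{n_{m+1}(d+1)!}{\prod_{i=1}^{m+1}n_i!}$, where $n_1=j_1$, $n_\ell=j_\ell-j_{\ell-1}$ ($2\le\ell\le m$), $n_{m+1}=d+2-j_m$ (and $n_1=d+2$ if $J=\varnothing$). *)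

From mathcomp Require Import all_boot all_order all_algebra.
Set Implicit Arguments. Unset Strict Implicit. Unset Printing Implicit Defensive.

Record matroid (T : finType) := Matroid {
  mrank : {set T} -> nat;
  mrank_card : forall A, mrank A <= #|A|;
  mrank_mono : forall A B : {set T}, A \subset B -> mrank A <= mrank B;
  mrank_submod : forall A B : {set T}, mrank (A :|: B) + mrank (A :&: B) <= mrank A + mrank B
}.

Definition loopless (T : finType) (M : matroid T) : Prop :=
  forall e : T, mrank M [set e] = 1.

Definition is_flat (T : finType) (M : matroid T) (F : {set T}) : bool :=
  [forall e, (e \notin F) ==> (mrank M F < mrank M (e |: F))].

(* Index set J = {j_1 < ... < j_m} represented as a strictly increasing list. *)
Definition NJ (T : finType) (r : {set T} -> nat) (flat : {set T} -> bool)
    (J : seq nat) : nat :=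
  #|[set c : (size J).-tuple {set T} |
      [&& all flat (tval c), [seq r G | G <- tval c] == J &
          sorted (fun A B : {set T} => A \proper B) (tval c)]]|.

Definition N_J (T : finType) (M : matroid T) (J : seq nat) : nat :=
  NJ (mrank M) (is_flat M) J.

(* Boolean matroid U_{d+1} on d+1 elements: rank = cardinality, every set a flat. *)
Definition U_J (d : nat) (J : seq nat) : nat :=
  NJ (fun A : {set 'I_d.+1} => #|A|) (fun _ => true) J.

Definition index_set (d : nat) (J : seq nat) : bool :=
  sorted ltn J && all (fun j => (1 <= j) && (j <= d)) J.

(* Insert the indices of J' \ J into J one at a time.  Inserting k between the
   neighbours a < k < b of J (with a = 0 and b = d + 1 at the ends) extends each
   chain of J by one rank-k flat lying between its members G of rank a and H of
   rank b.  In the Boolean matroid there are exactly C(b - a, k - a) such flats.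
   In any matroid there are at least as many: choose E inside H with
   |E| = b - a and rk (G u E) = rk G + |E|; then the closures of G u S, for the
   (k - a)-subsets S of E, are distinct.  So the insertion multiplies U by
   C(b - a, k - a) and multiplies N by at least that much, hence N / U cannot
   decrease. *)

From mathcomp Require Import all_boot all_order all_algebra.
From mathcomp Require Import zify.
Set Implicit Arguments. Unset Strict Implicit. Unset Printing Implicit Defensive.
Import Order.TTheory GRing.Theory Num.Theory.

Lemma sorted_cat_cons_remove (A : eqType) (e : rel A) : transitive e ->
  forall p x q, sorted e (p ++ x :: q) -> sorted e (p ++ q).
Proof. by move=> e_tr p x q; apply: (subseq_sorted e_tr); rewrite cat_subseq ?subseq_cons. Qed.

Section SubsetChains.
Variable T : finType.

Local Notation subset_rel := (fun A B : {set T} => A \subset B).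

Lemma sorted_subset_path0 (s : seq {set T}) : sorted subset_rel s = path subset_rel set0 s.
Proof. by case: s => //= A s; rewrite sub0set. Qed.

Lemma path_subset_head (X : {set T}) s :
  path subset_rel X s = (X \subset head setT s) && sorted subset_rel s.
Proof. by case: s => [|A s] //=; rewrite subsetT. Qed.

Lemma sorted_subset_cat (s1 s2 : seq {set T}) :
  sorted subset_rel (s1 ++ s2) =
  [&& sorted subset_rel s1, last set0 s1 \subset head setT s2 & sorted subset_rel s2].
Proof.
by rewrite [LHS]sorted_subset_path0 cat_path -sorted_subset_path0 path_subset_head.
Qed.

Lemma sorted_subset_insert (s1 s2 : seq {set T}) X :
  sorted subset_rel (s1 ++ X :: s2) =
  [&& sorted subset_rel (s1 ++ s2), last set0 s1 \subset X & X \subset head setT s2].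
Proof.
rewrite !sorted_subset_cat /= path_subset_head.
case: (sorted _ s1) (sorted _ s2) => [] [] /=; rewrite ?andbF ?andbT //.
apply/andP/and3P => [[sX sY] | [_ sX sY]]; split => //.
exact: subset_trans sX sY.
Qed.
End SubsetChains.

Section Chains.
Variables (T : finType) (r : {set T} -> nat) (fl : pred {set T}).

Definition is_chain (J : seq nat) (s : seq {set T}) : bool :=
  [&& all fl s, [seq r G | G <- s] == J & sorted (fun A B : {set T} => A \proper B) s].

Lemma NJ_tuple J m : size J = m -> NJ r fl J = #|[set c : m.-tuple {set T} | is_chain J c]|.
Proof. by move=> <-. Qed.

Lemma is_chainE J s : sorted ltn J ->
  is_chain J s = [&& all fl s, map r s == J & sorted (fun A B : {set T} => A \subset B) s].
Proof.
move=> sJ; rewrite /is_chain; case: eqP => //= rs; congr (_ && _).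
have sr : sorted (relpre r ltn) s by rewrite -sorted_map rs.
apply/idP/idP => [|ss]; first exact/sub_sorted/proper_sub.
have : sorted [rel A B : {set T} | (A \subset B) && (r A < r B)] s by rewrite sorted_relI ss.
apply: sub_sorted => A B /andP[sAB ltAB]; rewrite properEneq sAB andbT.
by apply: contraTneq ltAB => ->; rewrite ltnn.
Qed.

Lemma is_chain_insert p k q s1 X s2 : sorted ltn (p ++ k :: q) -> size s1 = size p ->
  is_chain (p ++ k :: q) (s1 ++ X :: s2) =
  [&& is_chain (p ++ q) (s1 ++ s2), fl X, r X == k,
      last set0 s1 \subset X & X \subset head setT s2].
Proof.
move=> sJ size_s1; have sJ0 := sorted_cat_cons_remove ltn_trans sJ.
rewrite !is_chainE // sorted_subset_insert !map_cat !all_cat /= !eqseq_cat ?size_map // eqseq_cons.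
by case: (all fl s1) (fl X) (all fl s2) (r X == k) => [] [] [] []; rewrite /= ?andbF //; bool_congr.
Qed.
End Chains.

Section InsertTuple.
Variables (A : Type) (m n : nat).

Lemma insert_tupleP (c : m.-tuple A) x : size (take n c ++ x :: drop n c) == m.+1.
Proof. by rewrite size_cat /= addnS -size_cat cat_take_drop size_tuple. Qed.

Definition insert_tuple (cx : m.-tuple A * A) : m.+1.-tuple A := Tuple (insert_tupleP cx.1 cx.2).

Lemma insert_tuple_inj : n <= m -> injective insert_tuple.
Proof.
move=> le_nm [c x] [c' x'] /(congr1 val) /= e.
have size_take_n (d : m.-tuple A) : size (take n d) = n by rewrite size_takel ?size_tuple.
have := congr1 (drop n) e; have := congr1 (take n) e.
rewrite !take_size_cat ?drop_size_cat // => e_take [-> e_drop].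
by congr pair; apply: val_inj; rewrite /= -(cat_take_drop n c) -(cat_take_drop n c') e_take e_drop.
Qed.
End InsertTuple.

Section Insertion.
Variables (T : finType) (r : {set T} -> nat) (fl : pred {set T}).
Variables (p : seq nat) (k : nat) (q : seq nat).
Hypothesis sorted_J : sorted ltn (p ++ k :: q).

Local Notation n := (size p).
Local Notation m := (size (p ++ q)).

(* The defaults set0 and setT stand for the missing neighbour at an end of the chain. *)
Definition gap_bottom (c : seq {set T}) := last set0 (take n c).
Definition gap_top (c : seq {set T}) := head setT (drop n c).
Definition gap_fillers (c : seq {set T}) :=
  [set X | [&& fl X, r X == k, gap_bottom c \subset X & X \subset gap_top c]].

Lemma gap_bottom_sub_top c : is_chain r fl (p ++ q) c -> gap_bottom c \subset gap_top c.
Proof.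
rewrite is_chainE ?(sorted_cat_cons_remove ltn_trans sorted_J) // => /and3P[_ _].
by rewrite -[c in sorted _ c](cat_take_drop n) sorted_subset_cat => /and3P[].
Qed.

Lemma rank_gap_bottom c : is_chain r fl (p ++ q) c -> r (gap_bottom c) = last (r set0) p.
Proof.
by case/and3P=> _ /eqP rc _; rewrite /gap_bottom -(last_map r) map_take rc take_size_cat.
Qed.

Lemma rank_gap_top c : is_chain r fl (p ++ q) c -> r (gap_top c) = head (r setT) q.
Proof.
case/and3P=> _ /eqP rc _; have : map r (drop n c) = q by rewrite map_drop rc drop_size_cat //.
by rewrite /gap_top; case: (drop n c) => [|X s] <-.
Qed.

Lemma gap_top_flat c : fl setT -> is_chain r fl (p ++ q) c -> fl (gap_top c).
Proof.
move=> flT /and3P[/allP flc _ _]; rewrite /gap_top.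
by case E: (drop n c) => [|X s] //=; apply/flc/(@mem_drop n); rewrite E mem_head.
Qed.

Lemma card_chains_insert :
  NJ r fl (p ++ k :: q) =
  \sum_(c : m.-tuple {set T} | is_chain r fl (p ++ q) c) #|gap_fillers c|.
Proof.
have le_nm : n <= m by rewrite size_cat leq_addr.
rewrite (@NJ_tuple _ _ _ _ m.+1); last by rewrite !size_cat addnS.
have -> : [set c' : m.+1.-tuple {set T} | is_chain r fl (p ++ k :: q) c'] =
    insert_tuple n @: [set cX : m.-tuple {set T} * {set T} |
                         is_chain r fl (p ++ q) cX.1 && (cX.2 \in gap_fillers cX.1)].
  apply/setP => c'; rewrite inE; apply/idP/imsetP => [chain_c' | [[c X]]].
    have [c1 [c2 [X [size_c1 c'E]]]] : exists c1 c2 X, size c1 = n /\ tval c' = c1 ++ X :: c2.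
      have lt_nc' : n < size c' by rewrite size_tuple ltnS.
      exists (take n c'), (drop n.+1 c'), (nth set0 c' n).
      by rewrite -drop_nth // cat_take_drop size_takel // ltnW.
    have cP : size (c1 ++ c2) == m.
      by move: (size_tuple c'); rewrite c'E !size_cat /= addnS => -[->].
    move: chain_c'; rewrite c'E is_chain_insert // => chain_cX.
    exists (Tuple cP, X); last by apply: val_inj; rewrite /= take_size_cat // drop_size_cat.
    by rewrite inE /gap_fillers inE /gap_bottom /gap_top /= take_size_cat // drop_size_cat.
  rewrite inE /gap_fillers inE /= => /andP[chain_c fill_X] ->.
  by rewrite is_chain_insert ?size_takel ?size_tuple // cat_take_drop chain_c.
rewrite card_imset; last exact: insert_tuple_inj.
by under [RHS]eq_bigr do rewrite -sum1_card; rewrite pair_big_dep sum1dep_card.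
Qed.
End Insertion.

Section MatroidFlats.
Variables (T : finType) (M : matroid T).
Local Notation r := (mrank M).
Implicit Types A E F G H S X : {set T}.

Lemma mrank0 : r set0 = 0.
Proof. by apply/eqP; rewrite -leqn0 -(cards0 T) mrank_card. Qed.

Lemma mrankU_le A X : r (A :|: X) <= r A + #|X|.
Proof. by have := mrank_submod M A X; have := mrank_card M X; lia. Qed.

Lemma mrankU_id A X : {in X, forall e, r (e |: A) = r A} -> r (A :|: X) = r A.
Proof.
rewrite -[X]set_enum; elim: (enum X) => [|e s IH]; first by rewrite set_nil setU0.
rewrite set_cons => loopsX.
have rAs : r (A :|: [set:: s]) = r A by apply: IH => x sx; apply: loopsX; rewrite setU1r.
have rAe : r (e |: A) = r A by apply: loopsX; rewrite setU11.
have := mrank_submod M (A :|: [set:: s]) (e |: A).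
have -> : A :|: [set:: s] :|: (e |: A) = A :|: (e |: [set:: s]).
  by apply/setP => x; rewrite !inE; case: (x \in A) (x == e) (x \in s) => [] [] [].
have : A \subset (A :|: [set:: s]) :&: (e |: A) by rewrite subsetI subsetUl subsetU1.
move/(mrank_mono M); have := mrank_mono M (subsetUl A (e |: [set:: s])); lia.
Qed.

Lemma flat_setT : is_flat M setT.
Proof. by apply/forallP => e; rewrite inE. Qed.

Definition closure A := [set e | r (e |: A) == r A].

Lemma subset_closure A : A \subset closure A.
Proof. by apply/subsetP => e Ae; rewrite inE (setUidPr _) ?sub1set. Qed.

Lemma mrank_closure A : r (closure A) = r A.
Proof.
by rewrite -(setUidPr (subset_closure A)); apply: mrankU_id => e; rewrite inE => /eqP.
Qed.

Lemma closure_flat A : is_flat M (closure A).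
Proof.
apply/forallP => e; apply/implyP; rewrite inE mrank_closure => eA.
apply: leq_trans (mrank_mono M (setUS _ (subset_closure A))).
by rewrite ltn_neqAle eq_sym eA mrank_mono ?subsetU1.
Qed.

Lemma closure_min A F : A \subset F -> is_flat M F -> closure A \subset F.
Proof.
move=> sAF /forallP flatF; apply/subsetP => e; rewrite inE => /eqP rAe.
apply: contraT => eF; have := implyP (flatF e) eF.
have := mrank_submod M (e |: A) F; rewrite -setUA (setUidPr sAF).
have : A \subset (e |: A) :&: F by rewrite subsetI subsetU1 sAF.
move/(mrank_mono M); rewrite rAe; lia.
Qed.

Lemma exists_independent_extension G H t : t <= r H - r G ->
  exists E, [/\ E \subset H, #|E| = t & r (G :|: E) = r G + t].
Proof.
elim: t => [|t IH] ltH; first by exists set0; rewrite sub0set cards0 setU0 addn0.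
have [E [sEH cardE rGE]] := IH (ltnW ltH).
case: (pickP [pred e in H | r (G :|: E) < r (e |: (G :|: E))]) => [e /andP[He incr] | stable].
  have eGE : e \notin G :|: E.
    by apply: contraL incr => GEe; rewrite (setUidPr (_ : [set e] \subset _)) ?sub1set ?ltnn.
  exists (e |: E); split; first by rewrite subUset sub1set He sEH.
    by rewrite cardsU1 cardE; move: eGE; rewrite inE negb_or => /andP[_ ->].
  rewrite setUCA; have := mrankU_le (G :|: E) [set e]; rewrite cards1 [_ :|: [set e]]setUC; lia.
have : r (G :|: E :|: H) = r (G :|: E).
  apply: mrankU_id => e He; apply/eqP; rewrite eqn_leq (mrank_mono M (subsetU1 _ _)) andbT.
  by rewrite leqNgt; have := stable e; rewrite /= He /= => ->.
have := mrank_mono M (subsetUr (G :|: E) H); lia.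
Qed.

Lemma mrank_independent_sub G E S : r (G :|: E) = r G + #|E| -> S \subset E ->
  r (G :|: S) = r G + #|S|.
Proof.
move=> rGE sSE; apply/eqP; rewrite eqn_leq mrankU_le /=.
have := mrankU_le (G :|: S) (E :\: S).
rewrite -setUA -{1}(setIidPr sSE) setID rGE cardsDS //.
by have := subset_leq_card sSE; lia.
Qed.

Lemma card_flats_between G H k : G \subset H -> is_flat M H -> r G <= k <= r H ->
  'C(r H - r G, k - r G) <= #|[set X | [&& is_flat M X, r X == k, G \subset X & X \subset H]]|.
Proof.
move=> sGH flatH /andP[leGk lekH].
have [E [sEH cardE rGE]] := exists_independent_extension (leqnn (r H - r G)).
rewrite -cardE in rGE; have indep := mrank_independent_sub rGE.
rewrite -cardE -cards_draws -(@card_in_imset _ _ (fun S => closure (G :|: S))).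
  apply/subset_leq_card/subsetP => X /imsetP[S]; rewrite inE => /andP[sSE /eqP cardS] ->.
  rewrite inE closure_flat mrank_closure indep // cardS subnKC // eqxx /=.
  rewrite (subset_trans (subsetUl G S) (subset_closure _)) closure_min //.
  by rewrite subUset sGH (subset_trans sSE sEH).
move=> S S'; rewrite !inE => /andP[sSE /eqP cardS] /andP[sS'E /eqP cardS'] eq_cl.
have sSS'E : S :|: S' \subset E by rewrite subUset sSE.
have : G :|: (S :|: S') \subset closure (G :|: S).
  rewrite setUA subUset subset_closure eq_cl /=.
  exact: subset_trans (subsetUr G S') (subset_closure _).
move/(mrank_mono M); rewrite mrank_closure !indep ?leq_add2l // => leSS'.
have eqS' : S' = S :|: S' by apply/eqP; rewrite eqEcard subsetUr cardS' -cardS leSS'.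
by apply/eqP; rewrite eqEcard cardS cardS' leqnn andbT eqS' subsetUl.
Qed.
End MatroidFlats.

Lemma card_sets_between (T : finType) (G H : {set T}) k : G \subset H -> #|G| <= k ->
  #|[set X : {set T} | [&& #|X| == k, G \subset X & X \subset H]]| = 'C(#|H| - #|G|, k - #|G|).
Proof.
move=> sGH leGk; rewrite -cardsDS // -cards_draws.
set draws := [set S : {set T} | S \subset H :\: G & _].
have UGK : {in draws, cancel (fun S => G :|: S) (fun X => X :\: G)}.
  move=> S; rewrite inE subsetD => /andP[/andP[_ disjSG] _].
  by rewrite setDUl setDv set0U; apply/setDidPl.
rewrite -(card_in_imset (can_in_inj UGK)); apply: eq_card => X.
rewrite inE; apply/and3P/imsetP => [[/eqP cardX sGX sXH] | [S DS ->]].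
  exists (X :\: G); last by rewrite -{1}(setIidPr sGX) setID.
  by rewrite inE setSD //= cardsDS // cardX.
move: (DS); rewrite inE subsetD => /andP[/andP[sSH disjSG] /eqP cardS].
rewrite cardsU setIC (disjoint_setI0 disjSG) cards0 cardS subn0 subnKC // subUset sGH sSH subsetUl.
by split.
Qed.

Local Open Scope ring_scope.

Lemma ler_ratio_scale (R : numFieldType) (N N' U C : nat) : (0 < C)%N -> (C * N <= N')%N ->
  N%:R / U%:R <= N'%:R / (C * U)%:R :> R.
Proof.
move=> C_gt0 le_CN_N'.
have -> : N%:R / U%:R = (C * N)%:R / (C * U)%:R :> R.
  by rewrite !natrM -mulf_div divff ?mul1r // pnatr_eq0 -lt0n.
by rewrite ler_wpM2r ?invr_ge0 ?ler0n ?ler_nat.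
Qed.

Definition chain_ratio (T : finType) (M : matroid T) (d : nat) (J : seq nat) : rat :=
  (N_J M J)%:R / (U_J d J)%:R.

Section ChainRatio.
Variables (T : finType) (M : matroid T) (d : nat).
Hypothesis rank_M : mrank M setT = d.+1.

Lemma index_set_remove p k q : index_set d (p ++ k :: q) -> index_set d (p ++ q).
Proof.
case/andP=> sJ bounds; rewrite /index_set (sorted_cat_cons_remove ltn_trans sJ).
by move: bounds; rewrite !all_cat /= => /and3P[-> _ ->].
Qed.

Lemma index_set_gap p k q : index_set d (p ++ k :: q) -> (last 0 p < k < head d.+1 q)%N.
Proof.
case/andP; rewrite sorted_cat_cons all_cat /= => /andP[sp sq] /and3P[_ /andP[k_ge1 k_le] _].
apply/andP; split; first by case: p sp => [|j p] //=; rewrite rcons_path => /andP[].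
by case: q sq => [|j q] //= /andP[].
Qed.

Lemma chain_ratio_le_insert p k q : index_set d (p ++ k :: q) ->
  chain_ratio M d (p ++ q) <= chain_ratio M d (p ++ k :: q).
Proof.
move=> Jd; have sJ : sorted ltn (p ++ k :: q) by case/andP: Jd.
have /andP[lt_ak lt_kb] := index_set_gap Jd.
set a := last 0%N p in lt_ak *; set b := head d.+1 q in lt_kb *.
have N_ge : ('C(b - a, k - a) * N_J M (p ++ q) <= N_J M (p ++ k :: q))%N.
  rewrite /N_J card_chains_insert // (NJ_tuple _ _ (erefl (size (p ++ q)))).
  rewrite mulnC -sum_nat_cond_const.
  apply: leq_sum => c chain_c.
  have := card_flats_between (gap_bottom_sub_top sJ chain_c) (gap_top_flat (flat_setT M) chain_c).
  rewrite (rank_gap_bottom chain_c) (rank_gap_top chain_c) mrank0 rank_M.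
  by apply; rewrite (ltnW lt_ak) (ltnW lt_kb).
have U_eq : ('C(b - a, k - a) * U_J d (p ++ q) = U_J d (p ++ k :: q))%N.
  rewrite /U_J card_chains_insert // (NJ_tuple _ _ (erefl (size (p ++ q)))).
  rewrite mulnC -sum_nat_cond_const.
  apply: eq_bigr => c chain_c.
  have := card_sets_between (gap_bottom_sub_top sJ chain_c) (_ : #|gap_bottom p c| <= k)%N.
  rewrite (rank_gap_bottom chain_c) (rank_gap_top chain_c) cards0 cardsT card_ord => <-.
    by apply: eq_card => X; rewrite !inE.
  exact: ltnW lt_ak.
by rewrite /chain_ratio -U_eq; apply: ler_ratio_scale; rewrite // bin_gt0 leq_sub2r // (ltnW lt_kb).
Qed.

Lemma chain_ratio_le_subset J J' : index_set d J -> index_set d J' -> {subset J <= J'} ->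
  chain_ratio M d J <= chain_ratio M d J'.
Proof.
move=> Jd; have [n] := ubnP (size J'); elim: n J' => // n IH J' lt_J'n J'd sJJ'.
have [/hasP[k J'k Jk] | /hasPn J'J] := boolP (has (fun j => j \notin J) J'); last first.
  suff -> : J = J' by [].
  apply: (irr_sorted_eq ltn_trans ltnn (proj1 (andP Jd)) (proj1 (andP J'd))) => j.
  by apply/idP/idP => [/sJJ' | /J'J /negbNE].
move: lt_J'n J'd sJJ'; case/splitPr: J'k => p q lt_n J'd sJJ'.
apply: le_trans (chain_ratio_le_insert J'd); apply: IH (index_set_remove J'd) _.
  by move: lt_n; rewrite !size_cat /= addnS ltnS.
move=> j Jj; have := sJJ' j Jj; rewrite !mem_cat in_cons.
by case: eqP => [jk | _]; first by move: Jk; rewrite -jk Jj.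
Qed.
End ChainRatio.

Theorem lemma3p29 (T : finType) (M : matroid T) (d : nat) (J J' : seq nat) :
  loopless M -> mrank M [set: T] = d.+1 ->
  index_set d J -> index_set d J' -> {subset J <= J'} ->
  (N_J M J)%:R / (U_J d J)%:R <= (N_J M J')%:R / (U_J d J')%:R :> rat.
Proof.
by move=> _ rank_M; apply: chain_ratio_le_subset.
Qed.
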